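(* Let $r\ge2$ and $\Lambda=\Phi^+_{A_{r+1}}\setminus\{\varepsilon_{r+1}-\varepsilon_{r+2}\}$. Then \[K_\Lambda(\varepsilon_1+\varepsilon_2-\varepsilon_{r+1}-\varepsilon_{r+2})=\mathsf{js}(\langle1,1\rangle,\langle1,1\rangle,r).\]
   Context: $\Phi^+_{A_{r+1}}=\{\varepsilon_i-\varepsilon_j:1\le i<j\le r+2\}\subset\mathbb{R}^{r+2}$; for $\Lambda\subseteq\Phi^+_{A_{r+1}}$, $K_\Lambda(\mu)$ is the number of finite multisets of elements of $\Lambda$ summing to $\mu$. A juggling state is a finitely supported integer vector $\langle s_1,s_2,\dots\rangle$ indexed by heights (trailing zeros omitted). A juggling sequence of length $n$ from $\mathbf{a}$ to $\mathbf{b}$ is a sequence $(\mathbf{s}_0,\dots,\mathbf{s}_n)$ with $\mathbf{s}_0=\mathbf{a}$, $\mathbf{s}_n=\mathbf{b}$ such that for each $i$ there are nonnegative integers $c^{(i)}_k$ (finitely many nonzero) with $\sum_k c^{(i)}_k=(\mathbf{s}_{i-1})_1$ and $(\mathbf{s}_i)_k=(\mathbf{s}_{i-1})_{k+1}+c^{(i)}_k$ for all $k\ge1$; $\mathsf{js}(\mathbf{a},\mathbf{b},n)$ is the number of such sequences. *)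

From mathcomp Require Import all_boot all_order all_algebra.
Set Implicit Arguments. Unset Strict Implicit. Unset Printing Implicit Defensive.
Import Order.TTheory GRing.Theory Num.Theory.

Definition card_of (T : eqType) (P : T -> Prop) (n : nat) : Prop :=
  exists s : seq T, [/\ uniq s, (forall x, P x <-> x \in s) & size s = n].

(* Coordinates of R^(r+2) are indexed 0..r+1 (epsilon_{i+1} <-> index i).
   The positive root eps_i - eps_j (i<j) is indexed by the pair (i,j). *)
Definition posroot (r : nat) (p : 'I_(r.+2) * 'I_(r.+2)) : bool :=
  (p.1 < p.2)%N.

Definition inLambda (r : nat) (p : 'I_(r.+2) * 'I_(r.+2)) : bool :=
  posroot p && ~~ ((nat_of_ord p.1 == r) && (nat_of_ord p.2 == r.+1)).

Definition root_coord (r : nat) (p : 'I_(r.+2) * 'I_(r.+2)) (k : 'I_(r.+2)) : int :=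
  ((k == p.1 : nat)%:Z - (k == p.2 : nat)%:Z)%R.

(* A finite multiset of elements of Lambda = multiplicity function
   supported on Lambda; it sums to mu. *)
Definition Kmultiset (r : nat) (mu : 'I_(r.+2) -> int)
  (m : {ffun 'I_(r.+2) * 'I_(r.+2) -> nat}) : Prop :=
  (forall p, ~~ inLambda p -> m p = 0%N) /\
  (forall k : 'I_(r.+2),
     (\sum_(p : 'I_(r.+2) * 'I_(r.+2)) (m p)%:Z * root_coord p k)%R = mu k).

Definition mu14 (r : nat) (k : 'I_(r.+2)) : int :=
  ((nat_of_ord k == 0%N : nat)%:Z + (nat_of_ord k == 1%N : nat)%:Z
   - (nat_of_ord k == r : nat)%:Z - (nat_of_ord k == r.+1 : nat)%:Z)%R.

(* Juggling states: finitely supported integer vectors <s_1, s_2, ...>,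
   represented as seq int with trailing zeros omitted; height k+1 is
   entry k (nth 0 s k). *)
Definition js_state (s : seq int) : bool := (s == [::]) || (last 0%R s != 0%R).

(* One juggling step: there are c_k in nat, finitely many nonzero
   (represented by a seq nat, c_{k+1} = nth 0 c k), summing to s_1, with
   t_k = s_{k+1} + c_k. *)
Definition js_step (s t : seq int) : Prop :=
  exists c : seq nat,
    Posz (sumn c) = nth 0%R s 0 /\
    forall k : nat, nth 0%R t k = (nth 0%R s k.+1 + (nth 0%N c k)%:Z)%R.

Definition js_seq (a b : seq int) (n : nat) (ss : seq (seq int)) : Prop :=
  [/\ size ss = n.+1, all js_state ss, nth [::] ss 0 = a, nth [::] ss n = b &
      forall i, (i < n)%N -> js_step (nth [::] ss i) (nth [::] ss i.+1)].

From mathcomp Require Import all_boot all_order all_algebra.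
From mathcomp Require Import zify lra.
Set Implicit Arguments. Unset Strict Implicit. Unset Printing Implicit Defensive.
Import Order.TTheory GRing.Theory Num.Theory.

(* A multiset m of roots eps_i - eps_j (i < j) is a flow on the vertices
   0, ..., r+1 with an edge i -> j of multiplicity m(i,j); summing to mu says
   that 0 and 1 are sources and r, r+1 are sinks, each of strength one.
   Read vertex i as time i and an edge i -> j as a ball thrown at time i that
   lands at time j.  The state at time i then lists, at height k+1, the balls
   landing at time i+k, and conservation of flow at i < r is the juggling rule
   that every ball landing at time i is thrown again.  Since the edge r -> r+1
   is excluded, nothing is thrown at time r, so the two sinks force the state
   at time r to be <1,1>.  Conversely, m(i,j) is recovered from a juggling
   sequence as the number of balls thrown at step i to height j - i.
   Finiteness of K comes from the total length sum m(i,j) (j - i) = 2r. *)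

Lemma card_of_bij (T U : eqType) (P : T -> Prop) (Q : U -> Prop) n
    (f : T -> U) (g : U -> T) :
  card_of P n -> (forall x, P x -> Q (f x)) -> (forall y, Q y -> P (g y)) ->
  (forall x, P x -> g (f x) = x) -> (forall y, Q y -> f (g y) = y) ->
  card_of Q n.
Proof.
move=> [s [us Ps ss]] PQ QP gf fg; exists (map f s); split.
- rewrite map_inj_in_uniq // => x y /Ps Px /Ps Py e.
  by rewrite -(gf x Px) e gf.
- move=> y; split.
  + by move=> Qy; rewrite -(fg y Qy); apply: map_f; apply/Ps/QP.
  + by case/mapP=> x /Ps Px ->; apply: PQ.
- by rewrite size_map.
Qed.

Lemma card_of_bounded_ffun (T : finType) (P : {ffun T -> nat} -> Prop)
    (Pb : pred {ffun T -> nat}) (b : nat) :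
  (forall m, reflect (P m) (Pb m)) -> (forall m x, P m -> m x <= b) ->
  exists N, card_of P N.
Proof.
move=> PbP Pbound.
pose widen (g : {ffun T -> 'I_b.+1}) : {ffun T -> nat} := [ffun x => nat_of_ord (g x)].
exists (size [seq m <- map widen (enum {: {ffun T -> 'I_b.+1}}) | Pb m]).
eexists; split; last reflexivity.
- apply: filter_uniq; rewrite map_inj_uniq ?enum_uniq // => g1 g2 e.
  apply/ffunP => x; apply: val_inj.
  by have := congr1 (fun f : {ffun T -> nat} => f x) e; rewrite !ffunE.
- move=> m; rewrite mem_filter; split.
  + move=> Pm; rewrite (introT (PbP m) Pm); apply/mapP.
    exists [ffun x => inord (m x)]; first by rewrite mem_enum.
    by apply/ffunP => x; rewrite !ffunE inordK // ltnS Pbound.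
  + by case/andP => /PbP.
Qed.

Lemma big_ord_vanish (F : nat -> nat) a b :
  a <= b -> (forall j, a <= j -> F j = 0) ->
  \sum_(j < b) F j = \sum_(j < a) F j.
Proof.
move=> ab F0; rewrite (big_ord_widen _ F ab) [RHS]big_mkcond.
by apply: eq_bigr => j _; case: ltnP => // /F0.
Qed.

Lemma sumn_nth_vanish (c : seq nat) (F : nat -> nat) n :
  (forall j, nth 0 c j = F j) -> (forall j, n <= j -> F j = 0) ->
  sumn c = \sum_(j < n) F j.
Proof.
move=> cF F0; rewrite sumnE (big_nth 0) big_mkord.
rewrite (eq_bigr (F \o val)) => [|j _]; last exact: cF.
rewrite -(@big_ord_vanish F n (size c + n)) ?leq_addl //.
rewrite -(@big_ord_vanish F (size c) (size c + n)) ?leq_addr // => j.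
by rewrite -cF => /(nth_default 0).
Qed.

Section JugglingStates.
Local Open Scope ring_scope.

Fixpoint trim (s : seq int) : seq int :=
  if s is x :: s' then
    let t := trim s' in if (t == [::]) && (x == 0) then [::] else x :: t
  else [::].

Lemma nth_trim s k : nth 0 (trim s) k = nth 0 s k.
Proof.
elim: s k => [|x s IH] k //=.
case: ifP => [/andP[/eqP t0 /eqP ->]|_]; last by case: k.
by case: k => [|k] //=; rewrite -IH t0 nth_nil.
Qed.

Lemma js_state_trim s : js_state (trim s).
Proof.
rewrite /js_state; elim: s => [|x s IH] //=.
case: ifP => [//|/negbT]; rewrite negb_and.
by case: (trim s) IH.
Qed.

Lemma js_state_eq s t : js_state s -> js_state t ->
  (forall k, nth 0 s k = nth 0 t k) -> s = t.
Proof.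
have size_le u v : js_state v -> (forall k, nth 0 u k = nth 0 v k) ->
    (size v <= size u)%N.
  case/orP=> [/eqP -> //|hv] e; rewrite leqNgt; apply/negP => lt.
  case: v hv e lt => [|y v] //= hv e lt.
  move: (e (size v)); rewrite nth_default; last by rewrite -ltnS.
  have /= last_nth := nth_last 0 (y :: v).
  by move=> h; rewrite -last_nth -h eqxx in hv.
move=> hs ht e; apply/(@eq_from_nth _ 0) => [|i _]; last exact: e.
by apply/eqP; rewrite eqn_leq !size_le.
Qed.

End JugglingStates.

Definition ground (k : nat) : nat := (k == 0) + (k == 1).

Lemma nth_ground k : nth 0%R [:: Posz 1; Posz 1] k = Posz (ground k).
Proof. by case: k => [|[|k]] //=; rewrite nth_nil. Qed.

Section Multisets.
Variable r : nat.
Local Notation idx := 'I_r.+2.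
Implicit Types (m : {ffun idx * idx -> nat}) (p : idx * idx).

(* [m] extended by zero to all pairs of naturals, so that shifted indices need
   no ordinal casts. *)
Definition mult m (u v : nat) : nat :=
  if (u < r.+2) && (v < r.+2) then m (inord u, inord v) else 0.

Lemma mult_ord m (i j : idx) : mult m i j = m (i, j).
Proof. by rewrite /mult !ltn_ord /= !inord_val. Qed.

Lemma mult_out m u v : r.+2 <= v -> mult m u v = 0.
Proof. by rewrite /mult leqNgt => /negbTE ->; rewrite andbF. Qed.

Definition outdeg m u := \sum_(v < r.+2) mult m u v.
Definition indeg m v := \sum_(u < r.+2) mult m u v.

Lemma root_flow m (k : idx) :
  (\sum_p (m p)%:Z * root_coord p k = (outdeg m k)%:Z - (indeg m k)%:Z)%R.
Proof.
have Posz_sum (F : idx -> nat) : Posz (\sum_i F i) = (\sum_i Posz (F i))%R.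
  exact: (big_morph Posz PoszD).
have -> : (\sum_p (m p)%:Z * root_coord p k =
            \sum_i \sum_j (m (i, j))%:Z * root_coord (i, j) k)%R.
  by rewrite pair_big; apply: eq_bigr => -[i j].
under eq_bigr => i _ do under eq_bigr => j _ do rewrite /root_coord mulrBr.
under eq_bigr => i _ do rewrite sumrB.
rewrite sumrB /outdeg /indeg !Posz_sum [in X in (_ - X)%R]exchange_big /=.
congr (_ - _)%R.
- rewrite (bigD1 k) //= [X in (_ + X)%R]big1 ?addr0 => [|i /negbTE ik].
    by apply: eq_bigr => j _; rewrite eqxx mulr1 mult_ord.
  by apply: big1 => j _; rewrite eq_sym ik mulr0.
- rewrite (bigD1 k) //= [X in (_ + X)%R]big1 ?addr0 => [|j /negbTE jk].
    by apply: eq_bigr => i _; rewrite eqxx mulr1 mult_ord.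
  by apply: big1 => i _; rewrite eq_sym jk mulr0.
Qed.

Definition supported m := forall p, ~~ inLambda p -> m p = 0.

Lemma mult_below m u v : supported m -> v <= u -> mult m u v = 0.
Proof.
move=> hs vu; rewrite /mult; case: ifP => // /andP [hu hv]; apply: hs.
by rewrite /inLambda /posroot /= !inordK //; lia.
Qed.

Lemma mult_excluded m : supported m -> mult m r r.+1 = 0.
Proof.
move=> hs; rewrite /mult ltnSn ltnW //; apply: hs.
by rewrite /inLambda /posroot /= !inordK // !eqxx andbF.
Qed.

Lemma sum_mul_indicator (c : nat) : c < r.+2 ->
  (\sum_(k : idx) (k : nat)%:Z * ((k : nat) == c : nat)%:Z = c%:Z)%R.
Proof.
move=> hc; rewrite (bigD1 (inord c)) //= inordK // eqxx mulr1 big1 ?addr0 //.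
move=> k kc; case: eqP => [ekc|_]; last by rewrite mulr0.
by move: kc; rewrite -ekc inord_val eqxx.
Qed.

Lemma moment_root_coord p :
  (\sum_(k : idx) (k : nat)%:Z * root_coord p k = (p.1 : nat)%:Z - (p.2 : nat)%:Z)%R.
Proof.
rewrite /root_coord; under eq_bigr => k _ do rewrite mulrBr -!val_eqE.
by rewrite sumrB /= !sum_mul_indicator.
Qed.

Lemma moment_mu14 :
  (\sum_(k : idx) (k : nat)%:Z * mu14 k = - (r.*2)%:Z)%R.
Proof.
rewrite /mu14; under eq_bigr => k _ do rewrite !mulrBr mulrDr.
rewrite !sumrB big_split /= !sum_mul_indicator //; lia.
Qed.

Lemma Kmultiset_weight mu m : Kmultiset mu m ->
  (\sum_p (m p)%:Z * ((p.2 : nat)%:Z - (p.1 : nat)%:Z) =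
   - \sum_(k : idx) (k : nat)%:Z * mu k)%R.
Proof.
case=> _ flow.
under [in RHS]eq_bigr => k _ do rewrite -flow mulr_sumr.
rewrite exchange_big /= -sumrN; apply: eq_bigr => p _.
rewrite -opprB mulrN -moment_root_coord mulr_sumr; congr (- _)%R.
by apply: eq_bigr => k _; rewrite mulrCA.
Qed.

Lemma Kmultiset_mu14_bound m p : Kmultiset (@mu14 r) m -> m p <= r.*2.
Proof.
move=> hK; case: (boolP (inLambda p)) => hp; last by rewrite hK.1.
have w := Kmultiset_weight hK; rewrite moment_mu14 opprK in w.
have : ((m p)%:Z * ((p.2 : nat)%:Z - (p.1 : nat)%:Z) <= (r.*2)%:Z)%R.
  rewrite -w (bigD1 p) //= lerDl; apply: sumr_ge0 => q _.
  case: (boolP (inLambda q)) => hq; last by rewrite hK.1 // mul0r.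
  by apply: mulr_ge0 => //; case/andP: hq; rewrite /posroot; lia.
by case/andP: hp; rewrite /posroot; nia.
Qed.

Definition Kmultisetb (mu : idx -> int) m : bool :=
  [forall p, ~~ inLambda p ==> (m p == 0)] &&
  [forall k, (\sum_p (m p)%:Z * root_coord p k == mu k)%R].

Lemma KmultisetP mu m : reflect (Kmultiset mu m) (Kmultisetb mu m).
Proof.
apply: (iffP andP) => [[/forallP h1 /forallP h2]|[h1 h2]]; split.
- by move=> p hp; apply/eqP; exact: (implyP (h1 p) hp).
- by move=> k; apply/eqP.
- by apply/forallP => p; apply/implyP => hp; rewrite h1.
- by apply/forallP => k; rewrite h2.
Qed.

Lemma Kmultiset_mu14_finite : exists N, card_of (Kmultiset (@mu14 r)) N.
Proof. exact: card_of_bounded_ffun (KmultisetP _) Kmultiset_mu14_bound. Qed.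

Lemma outdeg_tail m u : supported m -> r <= u -> outdeg m u = 0.
Proof.
move=> hs ru; apply: big1 => v _; case: (leqP v u) => [|uv]; first exact: mult_below.
have [-> ->] : u = r /\ nat_of_ord v = r.+1 by have := ltn_ord v; lia.
exact: mult_excluded.
Qed.

Lemma indeg_trunc m v : supported m -> v <= r.+2 ->
  indeg m v = \sum_(u < v) mult m u v.
Proof. by move=> hs hv; apply: (@big_ord_vanish (mult m ^~ v)) => // u /mult_below->. Qed.

Lemma outdeg_shift m u : supported m ->
  outdeg m u = \sum_(j < r.+2) mult m u (u.+1 + j).
Proof.
move=> hs; rewrite /outdeg.
rewrite -(@big_ord_vanish (mult m u) r.+2 (u.+1 + r.+2)) ?leq_addl //.
  rewrite big_split_ord /= big1 ?add0n // => v _.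
  by apply: mult_below hs _; exact: ltn_ord v.
by move=> v; apply: mult_out.
Qed.

Lemma Kmultiset_mu14P m : 2 <= r -> supported m ->
  Kmultiset (@mu14 r) m <->
  [/\ forall k, k < r -> outdeg m k = ground k + indeg m k,
      indeg m r = 1 & indeg m r.+1 = 1].
Proof.
move=> hr hs; have out_r := outdeg_tail hs (leqnn r).
have out_r1 := outdeg_tail hs (leqnSn r).
split=> [[_ flow] | [flow_lt in_r in_r1]].
  have flowE k : k < r.+2 ->
      ((outdeg m k)%:Z - (indeg m k)%:Z = mu14 (inord k : idx))%R.
    by move=> hk; rewrite -flow root_flow inordK.
  split.
  - by move=> k kr; have := flowE k; rewrite /mu14 /ground inordK; lia.
  - by have := flowE r; rewrite /mu14 inordK // out_r; lia.
  - by have := flowE r.+1; rewrite /mu14 inordK // out_r1; lia.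
split=> // k; rewrite root_flow /mu14.
have [kr|[->|->]] : k < r \/ nat_of_ord k = r \/ nat_of_ord k = r.+1.
- by have := ltn_ord k; lia.
- by have := flow_lt k kr; rewrite /ground; lia.
- by rewrite out_r in_r; lia.
- by rewrite out_r1 in_r1; lia.
Qed.

(* The balls in the air at time [i] that land at time [i + k]: those thrown
   before time [i] plus the two balls [ground] held at the start. *)
Definition load m i k : nat := ground (i + k) + \sum_(u < i) mult m u (i + k).

Definition state_at m i : seq int := trim (mkseq (fun k => Posz (load m i k)) r.+2).

Definition juggling_of m : seq (seq int) := mkseq (state_at m) r.+1.

Definition throws m i : seq nat := mkseq (fun k => mult m i (i.+1 + k)) r.+2.

Lemma load0 m k : load m 0 k = ground k.
Proof. by rewrite /load big_ord0 addn0. Qed.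

Lemma load_succ m i k : load m i.+1 k = load m i k.+1 + mult m i (i.+1 + k).
Proof. by rewrite /load big_ord_recr /= addnS addSn addnA. Qed.

Lemma load_out m i k : r.+2 <= i + k -> load m i k = 0.
Proof.
move=> h; rewrite /load big1 => [|u _]; last exact: mult_out.
by rewrite /ground; lia.
Qed.

Lemma load_indeg m v : supported m -> v < r.+2 -> load m v 0 = ground v + indeg m v.
Proof. by move=> hs hv; rewrite /load addn0 (indeg_trunc hs (ltnW hv)). Qed.

Lemma load_last m : supported m -> load m r 1 = ground r.+1 + indeg m r.+1.
Proof.
move=> hs; rewrite -(load_indeg hs (ltnSn _)) load_succ addn0 mult_excluded //.
by rewrite addn0.
Qed.

Lemma nth_state_at m i k : nth 0%R (state_at m i) k = Posz (load m i k).
Proof.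
rewrite /state_at nth_trim; case: (ltnP k r.+2) => hk; first by rewrite nth_mkseq.
by rewrite nth_default ?size_mkseq // load_out //; lia.
Qed.

Lemma nth_throws m i k : nth 0 (throws m i) k = mult m i (i.+1 + k).
Proof.
case: (ltnP k r.+2) => hk; first by rewrite nth_mkseq.
by rewrite nth_default ?size_mkseq // mult_out //; lia.
Qed.

Lemma state_at_ground m i :
  (forall k, load m i k = ground k) -> state_at m i = [:: Posz 1; Posz 1].
Proof.
move=> h; apply: js_state_eq; [exact: js_state_trim | by [] |].
by move=> k; rewrite nth_state_at nth_ground h.
Qed.

Lemma juggling_of_js m : 2 <= r -> Kmultiset (@mu14 r) m ->
  js_seq [:: Posz 1; Posz 1] [:: Posz 1; Posz 1] r (juggling_of m).
Proof.
move=> hr hK; have hs : supported m := hK.1.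
have [flow_lt in_r in_r1] := (Kmultiset_mu14P hr hs).1 hK.
split.
- by rewrite size_mkseq.
- by apply/allP => s /mapP [i _ ->]; exact: js_state_trim.
- by rewrite nth_mkseq //; apply: state_at_ground => k; exact: load0.
- rewrite nth_mkseq //; apply: state_at_ground => -[|[|k]].
  + by rewrite load_indeg // in_r /ground; lia.
  + by rewrite load_last // in_r1 /ground; lia.
  + by rewrite load_out //; lia.
- move=> i hi; rewrite !nth_mkseq ?ltnS ?(ltnW hi) //.
  exists (throws m i); split=> [|k]; last first.
    by rewrite !nth_state_at nth_throws load_succ PoszD.
  rewrite nth_state_at load_indeg //; last by lia.
  rewrite -flow_lt // (outdeg_shift _ hs).
  by congr Posz; apply: sumn_nth_vanish (nth_throws m i) _ => k hk; apply: mult_out; lia.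
Qed.

Definition height (ss : seq (seq int)) i k : int := nth 0%R (nth [::] ss i) k.

Definition multiset_of ss : {ffun idx * idx -> nat} :=
  [ffun p => if inLambda p then
     absz (height ss (p.1 : nat).+1 (p.2 - (p.1 : nat).+1) - height ss p.1 (p.2 - p.1))%R
   else 0].

Lemma multiset_of_supported ss : supported (multiset_of ss).
Proof. by move=> p hp; rewrite ffunE (negbTE hp). Qed.

Lemma height_juggling_of m i k : i <= r -> height (juggling_of m) i k = Posz (load m i k).
Proof. by move=> hi; rewrite /height nth_mkseq ?ltnS // nth_state_at. Qed.

Lemma multiset_of_juggling_of m : supported m -> multiset_of (juggling_of m) = m.
Proof.
move=> hs; apply/ffunP => -[i j]; rewrite ffunE /=.
case: ifP => hp; last by rewrite hs ?hp.
have [ij ir] : i < j /\ i < r.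
  move: hp; rewrite /inLambda /posroot /= => /andP [h1 h2].
  by have := ltn_ord j; have := ltn_ord i; move: h2; lia.
rewrite !height_juggling_of //; last exact: ltnW.
rewrite load_succ subnSK // subnKC // PoszD mult_ord.
by rewrite addrC addKr.
Qed.

Section FromJuggling.
Variable ss : seq (seq int).
Hypothesis hJ : js_seq [:: Posz 1; Posz 1] [:: Posz 1; Posz 1] r ss.

Lemma height_init k : height ss 0 k = Posz (ground k).
Proof. by case: hJ => _ _ h0 _ _; rewrite /height h0 nth_ground. Qed.

Lemma height_final k : height ss r k = Posz (ground k).
Proof. by case: hJ => _ _ _ hr _; rewrite /height hr nth_ground. Qed.

Lemma height_step i : i < r ->
  exists c : seq nat, Posz (sumn c) = height ss i 0 /\
    forall k, height ss i.+1 k = (height ss i k.+1 + Posz (nth 0 c k))%R.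
Proof. by case: hJ => _ _ _ _ h; apply: h. Qed.

Lemma height_ge0 i k : i <= r -> (0 <= height ss i k)%R.
Proof.
elim: i k => [|i IH] k hi; first by rewrite height_init.
have [c [_ ->]] := height_step hi.
by apply: addr_ge0 => //; apply: IH; exact: ltnW.
Qed.

Lemma throw_ge0 i k : i < r -> (0 <= height ss i.+1 k - height ss i k.+1)%R.
Proof. by move=> hi; have [c [_ ->]] := height_step hi; rewrite addrC addKr. Qed.

(* Balls only fall: one at height k + d at time i is at height k at time i + d. *)
Lemma height_fall d i k : i + d <= r -> (height ss i (k + d) <= height ss (i + d) k)%R.
Proof.
elim: d i k => [|d IH] i k hd; first by rewrite !addn0.
rewrite addnS -addSn; apply: le_trans (IH i k.+1 _) _; first by lia.
have hid : i + d < r by lia.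
by have := throw_ge0 k hid; rewrite addnS; lra.
Qed.

Lemma height_vanish i k : i <= r -> r.+2 <= i + k -> height ss i k = 0%R.
Proof.
move=> hi hk; apply/eqP; rewrite eq_le height_ge0 // andbT.
have ri : r - i <= k by lia.
have := @height_fall (r - i) i (k - (r - i)).
rewrite subnK // subnKC // height_final /ground => /(_ (leqnn r)).
by have [-> ->] : (k - (r - i) == 0) = false /\ (k - (r - i) == 1) = false by lia.
Qed.

Lemma mult_multiset_of i k : i < r ->
  Posz (mult (multiset_of ss) i (i.+1 + k)) = (height ss i.+1 k - height ss i k.+1)%R.
Proof.
move=> hi; case: (ltnP (i.+1 + k) r.+2) => hk; last first.
  by rewrite mult_out // !height_vanish ?subrr //; lia.
rewrite /mult ifT; last by apply/andP; split=> //; lia.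
have hi2 : i < r.+2 by lia.
rewrite ffunE /= !inordK // ifT; last by rewrite /inLambda /posroot /= !inordK //; lia.
rewrite addKn (_ : i.+1 + k - i = k.+1); last by lia.
by have := throw_ge0 k hi; case: (_ - _)%R.
Qed.

Lemma load_multiset_of i k : i <= r -> Posz (load (multiset_of ss) i k) = height ss i k.
Proof.
elim: i k => [|i IH] k hi; first by rewrite load0 height_init.
by rewrite load_succ PoszD IH ?mult_multiset_of ?(ltnW hi) // addrC subrK.
Qed.

Lemma juggling_of_multiset_of : juggling_of (multiset_of ss) = ss.
Proof.
have [hsz hall _ _ _] := hJ.
apply: (@eq_from_nth _ [::]) => [|i]; first by rewrite size_mkseq hsz.
rewrite size_mkseq => hi; rewrite nth_mkseq //.
apply: js_state_eq; first exact: js_state_trim.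
  by apply: (allP hall); apply: mem_nth; rewrite hsz.
by move=> k; rewrite nth_state_at load_multiset_of.
Qed.

Lemma multiset_of_Kmultiset : 2 <= r -> Kmultiset (@mu14 r) (multiset_of ss).
Proof.
move=> hr; set m := multiset_of ss; have hs : supported m := multiset_of_supported ss.
apply/(Kmultiset_mu14P hr hs); split.
- move=> k kr; have [c [sum_c step_c]] := height_step kr.
  have nth_c j : nth 0 c j = mult m k (k.+1 + j).
    by apply/eqP; rewrite -eqz_nat mult_multiset_of // step_c addrC addKr.
  have out_c : outdeg m k = sumn c.
    rewrite (outdeg_shift _ hs); symmetry; apply: sumn_nth_vanish nth_c _.
    by move=> j hj; apply: mult_out; lia.
  apply/eqP; rewrite -eqz_nat out_c sum_c -load_multiset_of ?(ltnW kr) //.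
  by rewrite load_indeg //; lia.
- have := load_multiset_of 0 (leqnn r).
  by rewrite height_final load_indeg // => -[]; rewrite -/m /ground; lia.
- have := load_multiset_of 1 (leqnn r).
  by rewrite height_final load_last // => -[]; rewrite -/m /ground; lia.
Qed.

End FromJuggling.

End Multisets.

Theorem mainTheorem14 (r : nat) (hr : (2 <= r)%N) :
  exists N : nat,
    card_of (@Kmultiset r (@mu14 r)) N /\
    card_of (js_seq [:: Posz 1; Posz 1] [:: Posz 1; Posz 1] r) N.
Proof.
have [N hN] := Kmultiset_mu14_finite r; exists N; split=> //.
apply: (card_of_bij hN) => [m hK | ss hJ | m hK | ss hJ].
- exact: juggling_of_js hr hK.
- exact: multiset_of_Kmultiset hJ hr.
- exact: multiset_of_juggling_of hK.1.
- exact: juggling_of_multiset_of hJ.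
Qed.
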